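(* Let $k$ be an algebraically closed field, $B$ a finite-dimensional $k$-algebra, $P_0$ a finitely generated projective $B$-module, $A=B[P_0]$ the one-point extension, $\mathcal{R}$ the restriction functor and $S$ the simple injective $A$-module described below. Let $T$ be a silting $A$-module with respect to a projective presentation $\sigma:Q_1\to Q_0$ of $T$. Then (1) $\mathscr{D}_{\mathcal{R}\sigma}\subseteq\mathrm{Gen}(\mathcal{R}T)$; (2) if $\mathrm{Ext}^1_A(S,T)=0$, then $\mathrm{Gen}(\mathcal{R}T)\subseteq\mathscr{D}_{\mathcal{R}\sigma}$; in particular $\mathcal{R}T$ is a silting $B$-module.
   Context: All modules are left modules, in the category $\mathrm{Mod}\text{-}R$ of all modules. $A=\begin{pmatrix} B & P_0\\ 0 & k\end{pmatrix}$; $e_B$ is the identity of $B$ viewed in $A$; $\mathcal{R}=\mathrm{Hom}_A(Ae_B,-):\mathrm{Mod}\text{-}A\to\mathrm{Mod}\text{-}B$ (exact, preserves projectives). $S$ is the simple top of the unique indecomposable projective $A$-module which is not a projective $B$-module. A projective presentation of $T$ is a morphism $\sigma:Q_1\to Q_0$ of projective modules with $\mathrm{Coker}\,\sigma\cong T$; $\mathcal{R}\sigma:\mathcal{R}Q_1\to\mathcal{R}Q_0$ is then a projective presentation of $\mathcal{R}T$. For such $\sigma$, $\mathscr{D}_\sigma$ is the class of modules $M$ such that $\mathrm{Hom}(\sigma,M):\mathrm{Hom}(Q_0,M)\to\mathrm{Hom}(Q_1,M)$ is surjective. $\mathrm{Gen}(T)$ is the class of epimorphic images of arbitrary direct sums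 of copies of $T$. $T$ is silting if it has a projective presentation $\sigma$ with $\mathscr{D}_\sigma=\mathrm{Gen}(T)$. *)

From HB Require Import structures.
From mathcomp Require Import all_boot all_algebra all_field.
Set Warnings "-redundant-canonical-projection -ambiguous-paths -notation-overridden".
Set Implicit Arguments.
Unset Strict Implicit.
Unset Printing Implicit Defensive.
Import GRing.Theory.
Local Open Scope ring_scope.

(* The one-point extension A = [[B, P0], [0, k]] of a k-algebra B by   *)
(* a left B-module P0.  Elements are triples ((b, p), c) standing for  *)
(* the matrix [[b, p], [0, c]]; the right k-action on P0 is via c%:A.  *)
Section OnePoint.
Variables (k : fieldType) (B : falgType k) (P0 : lmodType B).

Definition onept : Type := (B * P0 * k)%type.
HB.instance Definition _ := GRing.Zmodule.on onept.

Definition rk (c : k) (p : P0) : P0 := (c%:A : B) *: p.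

Definition opmul (x y : onept) : onept :=
  ((x.1.1 * y.1.1, x.1.1 *: y.1.2 + rk y.2 x.1.2), x.2 * y.2).
Definition opone : onept := ((1, 0), 1).

Lemma rkA c d p : rk c (rk d p) = rk (d * c) p.
Proof. by rewrite /rk scalerA mulr_algl scalerA mulrC. Qed.

Lemma rkD c x y : rk c (x + y) = rk c x + rk c y.
Proof. by rewrite /rk scalerDr. Qed.

Lemma rk_comm b c p : b *: rk c p = rk c (b *: p).
Proof. by rewrite /rk !scalerA mulr_algl mulr_algr. Qed.

Lemma opmulA : associative opmul.
Proof.
move=> [[a p] c] [[a' p'] c'] [[a'' p''] c'']; rewrite /opmul /=.
congr ((_, _), _); first by rewrite mulrA.
  by rewrite scalerDr rk_comm scalerA rkD rkA addrA.
by rewrite mulrA.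
Qed.

Lemma opmul1 : left_id opone opmul.
Proof.
move=> [[a p] c]; rewrite /opmul /= mul1r scale1r /rk scaler0 addr0 mul1r.
by [].
Qed.

Lemma opmulr1 : right_id opone opmul.
Proof.
move=> [[a p] c]; rewrite /opmul /= mulr1 scaler0 add0r /rk.
by rewrite !scale1r mulr1.
Qed.

Lemma opmulDl : left_distributive opmul +%R.
Proof.
move=> [[a p] c] [[a' p'] c'] [[a'' p''] c'']; rewrite /opmul /= /rk.
congr ((_, _), _); first by rewrite mulrDl.
  by rewrite scalerDl scalerDr addrACA.
by rewrite mulrDl.
Qed.

Lemma opmulDr : right_distributive opmul +%R.
Proof.
move=> [[a p] c] [[a' p'] c'] [[a'' p''] c'']; rewrite /opmul /= /rk.
congr ((_, _), _); first by rewrite mulrDr.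
  by rewrite scalerDr !scalerDl addrACA.
by rewrite mulrDr.
Qed.

Lemma opone_neq0 : opone != 0.
Proof.
apply/eqP => /(congr1 snd) /= /eqP; by rewrite oner_eq0.
Qed.

HB.instance Definition _ := GRing.Zmodule_isNzRing.Build onept
  opmulA opmul1 opmulr1 opmulDl opmulDr opone_neq0.

End OnePoint.

(* The restriction functor R = Hom_A(A e_B, -) ~= e_B (-) : Mod-A ->   *)
(* Mod-B, realised on the e_B-fixed part {x | e_B x = x} of M.         *)
Section Restriction.
Variables (k : fieldType) (B : falgType k) (P0 : lmodType B).
Local Notation A := (onept P0).

Definition eB : A := ((1, 0), 0).
Definition inB (b : B) : A := ((b, 0), 0).

Lemma mulA_def (x y : A) : x * y = opmul x y.
Proof. by []. Qed.

Lemma eB_inB b : eB * inB b = inB b.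
Proof.
by rewrite mulA_def /opmul /eB /inB /= mul1r scaler0 /rk scaler0 addr0 mul0r.
Qed.

Variable M : lmodType A.

Definition RM : Type := {x : M | eB *: x == x}.
HB.instance Definition _ := Choice.on RM.
Definition RMmk (z : M) (h : eB *: z == z) : RM :=
  exist (fun z : M => eB *: z == z) z h.

Lemma RM0_subproof : eB *: (0 : M) == 0.
Proof. by rewrite scaler0. Qed.
Definition RM0 : RM := RMmk RM0_subproof.

Lemma RMadd_subproof (x y : RM) : eB *: (sval x + sval y) == sval x + sval y.
Proof. by rewrite scalerDr (eqP (svalP x)) (eqP (svalP y)). Qed.
Definition RMadd (x y : RM) : RM := RMmk (RMadd_subproof x y).

Lemma RMopp_subproof (x : RM) : eB *: (- sval x) == - sval x.
Proof. by rewrite scalerN (eqP (svalP x)). Qed.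
Definition RMopp (x : RM) : RM := RMmk (RMopp_subproof x).

Lemma RMaddA : associative RMadd.
Proof. by move=> x y z; apply: val_inj; rewrite /= addrA. Qed.
Lemma RMaddC : commutative RMadd.
Proof. by move=> x y; apply: val_inj; rewrite /= addrC. Qed.
Lemma RMadd0 : left_id RM0 RMadd.
Proof. by move=> x; apply: val_inj; rewrite /= add0r. Qed.
Lemma RMaddN : left_inverse RM0 RMopp RMadd.
Proof. by move=> x; apply: val_inj; rewrite /= addNr. Qed.

HB.instance Definition _ := GRing.isZmodule.Build RM RMaddA RMaddC RMadd0 RMaddN.

Lemma RMscale_subproof (b : B) (x : RM) : eB *: (inB b *: sval x) == inB b *: sval x.
Proof. by rewrite scalerA eB_inB. Qed.
Definition RMscale (b : B) (x : RM) : RM := RMmk (RMscale_subproof b x).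

Lemma inBM b c : inB b * inB c = inB (b * c).
Proof.
by rewrite mulA_def /opmul /inB /= scaler0 /rk scaler0 addr0 mul0r.
Qed.
Lemma inB1 x : RMscale 1 x = x.
Proof.
by apply: val_inj; rewrite /= (eqP (svalP x)).
Qed.
Lemma inBD b c : inB (b + c) = inB b + inB c.
Proof. by rewrite /inB; congr ((_, _), _); rewrite addr0. Qed.

Lemma RMscaleA b c x : RMscale b (RMscale c x) = RMscale (b * c) x.
Proof. by apply: val_inj; rewrite /= scalerA inBM. Qed.
Lemma RMscaleDr : right_distributive RMscale +%R.
Proof. by move=> b x y; apply: val_inj; rewrite /= scalerDr. Qed.
Lemma RMscaleDl x : {morph RMscale^~ x : b c / b + c}.
Proof. by move=> b c; apply: val_inj; rewrite /= inBD scalerDl. Qed.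

HB.instance Definition _ := GRing.Zmodule_isLmodule.Build B RM
  RMscaleA inB1 RMscaleDr RMscaleDl.

End Restriction.

Section RestrictionMor.
Variables (k : fieldType) (B : falgType k) (P0 : lmodType B).
Local Notation A := (onept P0).
Variables (M N : lmodType A) (f : {linear M -> N}).

Lemma Rfun_subproof (x : RM M) : eB P0 *: f (sval x) == f (sval x).
Proof. by rewrite -linearZ (eqP (svalP x)). Qed.
Definition Rfun (x : RM M) : RM N := RMmk (Rfun_subproof x).

Lemma Rfun_linear : linear Rfun.
Proof. by move=> a x y; apply: val_inj; rewrite /= linearP. Qed.

HB.instance Definition _ := GRing.isLinear.Build B (RM M) (RM N) *:%R Rfun
  Rfun_linear.

Definition Rmor : {linear RM M -> RM N} := Rfun.
End RestrictionMor.

(* S: the simple top of the indecomposable projective A e_k, i.e. the  *)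
(* one-dimensional module k on which ((b, p), c) acts by c.           *)
Section SimpleS.
Variables (k : fieldType) (B : falgType k) (P0 : lmodType B).
Local Notation A := (onept P0).

Definition Smod : Type := let _ := P0 in k.
HB.instance Definition _ := GRing.Zmodule.on Smod.

Definition Sscale (a : A) (c : Smod) : Smod := (a.2 * (c : k) : k).
Lemma SscaleA a b c : Sscale a (Sscale b c) = Sscale (a * b) c.
Proof. by rewrite /Sscale mulrA. Qed.
Lemma Sscale1 : left_id 1 Sscale.
Proof. by move=> c; rewrite /Sscale /= mul1r. Qed.
Lemma SscaleDr : right_distributive Sscale +%R.
Proof. by move=> a x y; rewrite /Sscale mulrDr. Qed.
Lemma SscaleDl c : {morph Sscale^~ c : a b / a + b}.
Proof. by move=> a b; rewrite /Sscale mulrDl. Qed.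
HB.instance Definition _ := GRing.Zmodule_isLmodule.Build A Smod
  SscaleA Sscale1 SscaleDr SscaleDl.
End SimpleS.

Section ModuleNotions.
Variable R : nzRingType.

Definition surj (X Y : Type) (f : X -> Y) := forall y, exists x, f x = y.

Definition projective (P : lmodType R) : Prop :=
  forall (M N : lmodType R) (g : {linear M -> N}) (f : {linear P -> N}),
    surj g -> exists h : {linear P -> M}, forall x, g (h x) = f x.

Definition fin_gen (P : lmodType R) : Prop :=
  exists (n : nat) (v : 'I_n -> P),
    forall p : P, exists c : 'I_n -> R, p = \sum_(i < n) c i *: v i.

Definition proj_presentation (Q1 Q0 : lmodType R) (sigma : {linear Q1 -> Q0})
  (T : lmodType R)
  : Prop :=
  [/\ projective Q1, projective Q0 &
      exists pi : {linear Q0 -> T},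
        surj pi /\ forall y, pi y = 0 <-> exists x, sigma x = y].

Definition Dcls (Q1 Q0 : lmodType R) (sigma : {linear Q1 -> Q0})
  (M : lmodType R) : Prop :=
  forall f : {linear Q1 -> M}, exists g : {linear Q0 -> M},
    forall x, g (sigma x) = f x.

(* Gen(T): M is an epimorphic image of a direct sum T^(I) of copies of T;
   the image of the map T^(I) -> M induced by a family (F i)_i of maps
   T -> M is the set of finite sums of elements F i t. *)
Definition Gen (T M : lmodType R) : Prop :=
  exists (I : Type) (F : I -> {linear T -> M}),
    forall m : M, exists s : seq (I * T), m = \sum_(q <- s) F q.1 q.2.

Definition silting_wrt (Q1 Q0 : lmodType R) (sigma : {linear Q1 -> Q0})
  (T : lmodType R)
  : Prop :=
  proj_presentation sigma T /\ forall M : lmodType R, Dcls sigma M <-> Gen T M.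

Definition silting (T : lmodType R) : Prop :=
  exists (Q1 Q0 : lmodType R) (sigma : {linear Q1 -> Q0}), silting_wrt sigma T.

(* Ext^1_R(X, Y) = 0 (Yoneda description): every short exact sequence
   0 -> Y -> E -> X -> 0 splits. *)
Definition Ext1_zero (X Y : lmodType R) : Prop :=
  forall (E : lmodType R) (i : {linear Y -> E}) (p : {linear E -> X}),
    injective i -> surj p -> (forall e, p e = 0 <-> exists y, i y = e) ->
    exists s : {linear X -> E}, forall x, p (s x) = x.

End ModuleNotions.

(* [RM] has an exact right adjoint [L N = Hom_B(e_B A, N)] (here [coind N]) with
   [RM (L N) = N], so [Hom(RM sigma, N)] is onto iff [Hom(sigma, L N)] is.  Hence
   [N \in D_(RM sigma)] gives [L N \in D_sigma = Gen T] and [N \in Gen (RM T)],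
   which is (1).  For (2), [N \in Gen (RM T)] forces [L N \in Gen T]: an element of
   [L N] is a pair [(n, h)] with [h : P0 -> N]; [(n, 0)] comes from [RM T], and
   expanding [h] along a dual basis of the finitely generated projective [P0]
   reduces it to maps [P0 -> RM T], each of which lifts to an element of [T]
   because the extension of [S] by [T] it determines splits.  Finally [L]
   preserves epimorphisms ([P0] is projective), so [RM] preserves projectives and
   [RM sigma] is a projective presentation of [RM T]. *)

From HB Require Import structures.
From mathcomp Require Import all_boot all_algebra all_field.
From mathcomp Require Import boolp.
Set Warnings "-notation-overridden -ambiguous-paths -redundant-canonical-projection".
Set Implicit Arguments.
Unset Strict Implicit.
Unset Printing Implicit Defensive.
Import GRing.Theory.
Local Open Scope ring_scope.

Section OnePointCalculus.
Variables (k : fieldType) (B : falgType k) (P0 : lmodType B).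
Local Notation A := (onept P0).
Local Notation eB := (eB P0).
Local Notation inB := (inB P0).

Definition inP (p : P0) : A := ((0, p), 0).

Lemma rk0 (p : P0) : rk 0 p = 0.
Proof. by rewrite /rk !scale0r. Qed.

Lemma rk1 (p : P0) : rk 1 p = p.
Proof. by rewrite /rk !scale1r. Qed.

Lemma rkr0 c : rk c (0 : P0) = 0.
Proof. by rewrite /rk scaler0. Qed.

Lemma rkDl c d (p : P0) : rk (c + d) p = rk c p + rk d p.
Proof. by rewrite /rk !scalerDl. Qed.

Lemma mul_eB (a : A) : a * eB = inB a.1.1.
Proof. by rewrite mulA_def /opmul /= mulr1 scaler0 rk0 addr0 mulr0. Qed.

Lemma eB_mul (a : A) : eB * a = inB a.1.1 + inP a.1.2.
Proof.
rewrite mulA_def /opmul /= mul1r scale1r rkr0 addr0 mul0r.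
by rewrite /inB /inP; congr ((_, _), _); rewrite ?addr0 ?add0r.
Qed.

Lemma inP_mul p (a : A) : inP p * a = inP (rk a.2 p).
Proof. by rewrite mulA_def /opmul /= mul0r scale0r add0r mul0r. Qed.

Lemma inB_inP b p : inB b * inP p = inP (b *: p).
Proof. by rewrite mulA_def /opmul /= mulr0 rkr0 addr0 mulr0. Qed.

Lemma inPD p q : inP (p + q) = inP p + inP q.
Proof. by rewrite /inP; congr ((_, _), _); rewrite addr0. Qed.

End OnePointCalculus.

Section RestrictionCalculus.
Variables (k : fieldType) (B : falgType k) (P0 : lmodType B).
Local Notation A := (onept P0).
Local Notation eB := (eB P0).
Local Notation inB := (inB P0).
Variable Q : lmodType A.

Lemma RM_eB (x : RM Q) : eB *: val x = val x.
Proof. exact: eqP (svalP x). Qed.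

Lemma scale_RM (a : A) (x : RM Q) : a *: val x = val (a.1.1 *: x).
Proof. by rewrite -RM_eB scalerA mul_eB. Qed.

Lemma Rproj_subproof (q : Q) : eB *: (eB *: q) == eB *: q.
Proof. by rewrite scalerA mul_eB. Qed.
Definition Rproj (q : Q) : RM Q := RMmk (Rproj_subproof q).

Lemma RinP_subproof p (q : Q) : eB *: (inP p *: q) == inP p *: q.
Proof. by rewrite scalerA eB_mul /= add0r. Qed.
Definition RinP p (q : Q) : RM Q := RMmk (RinP_subproof p q).

Lemma Rproj_val (x : RM Q) : Rproj (val x) = x.
Proof. by apply: val_inj; rewrite /= RM_eB. Qed.

Lemma RinP_val p (x : RM Q) : RinP p (val x) = 0.
Proof. by apply: val_inj; rewrite /= scale_RM /= scale0r. Qed.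

Lemma RprojP (a : A) q q' :
  Rproj (a *: q + q') = a.1.1 *: Rproj q + RinP a.1.2 q + Rproj q'.
Proof.
apply: val_inj; rewrite /= scalerDr scalerA eB_mul scalerDl.
by rewrite scalerA mul_eB.
Qed.

Lemma RinPP (a : A) p q q' : RinP p (a *: q + q') = RinP (rk a.2 p) q + RinP p q'.
Proof. by apply: val_inj; rewrite /= scalerDr scalerA inP_mul. Qed.

Lemma RinP_linear q : linear (RinP^~ q).
Proof. by move=> b p p'; apply: val_inj; rewrite /= inPD scalerDl -inB_inP scalerA. Qed.

End RestrictionCalculus.

Section RestrictionMorphism.
Variables (k : fieldType) (B : falgType k) (P0 : lmodType B).
Variables (Q Q' : lmodType (onept P0)) (f : {linear Q -> Q'}).

Lemma Rproj_mor q : Rproj (f q) = Rmor f (Rproj q).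
Proof. by apply: val_inj; rewrite /= linearZ. Qed.

Lemma RinP_mor p q : RinP p (f q) = Rmor f (RinP p q).
Proof. by apply: val_inj; rewrite /= linearZ. Qed.

End RestrictionMorphism.

Section Coinduction.
Variables (k : fieldType) (B : falgType k) (P0 : lmodType B).
Local Notation A := (onept P0).
Variable N : lmodType B.

(* [coind N] is the right adjoint [Hom_B(e_B A, N)] of [RM]: as a left B-module
   [e_B A = B (+) P0], so a B-map out of it is its value [ctop] at [e_B] together
   with its restriction [cmap] to [P0]; [A] acts by right multiplication on [e_B A]. *)
Record coind := Coind { ctop : N; cmap : P0 -> N; cmapP : linear cmap }.
HB.instance Definition _ := gen_eqMixin coind.
HB.instance Definition _ := gen_choiceMixin coind.
HB.instance Definition _ (x : coind) :=
  GRing.isLinear.Build B P0 N *:%R (cmap x) (cmapP x).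

Lemma coindP x y : ctop x = ctop y -> cmap x =1 cmap y -> x = y.
Proof.
case: x y => n h hL [n' h' hL'] /= <- /funext eq_h; subst h'.
by congr Coind; apply: Prop_irrelevance.
Qed.

Lemma linear_cst0 : linear (fun _ : P0 => 0 : N).
Proof. by move=> a p q; rewrite scaler0 addr0. Qed.

Lemma linear_cadd x y : linear (fun p => cmap x p + cmap y p).
Proof. by move=> a p q; rewrite !linearP scalerDr addrACA. Qed.

Lemma linear_copp x : linear (fun p => - cmap x p).
Proof. by move=> a p q; rewrite linearP opprD scalerN. Qed.

Definition czero := Coind 0 linear_cst0.
Definition cadd x y := Coind (ctop x + ctop y) (linear_cadd x y).
Definition copp x := Coind (- ctop x) (linear_copp x).

Lemma caddA : associative cadd.
Proof. by move=> x y z; apply: coindP => [|p] /=; rewrite addrA. Qed.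
Lemma caddC : commutative cadd.
Proof. by move=> x y; apply: coindP => [|p] /=; rewrite addrC. Qed.
Lemma cadd0 : left_id czero cadd.
Proof. by move=> x; apply: coindP => [|p] /=; rewrite add0r. Qed.
Lemma caddN : left_inverse czero copp cadd.
Proof. by move=> x; apply: coindP => [|p] /=; rewrite addNr. Qed.
HB.instance Definition _ := GRing.isZmodule.Build coind caddA caddC cadd0 caddN.

Lemma linear_cscale (a : A) x : linear (fun p => cmap x (rk a.2 p)).
Proof. by move=> b p q; rewrite rkD -rk_comm linearP. Qed.

Definition cscale (a : A) x :=
  Coind (a.1.1 *: ctop x + cmap x a.1.2) (linear_cscale a x).

Lemma cscaleA a b x : cscale a (cscale b x) = cscale (a * b) x.
Proof.
apply: coindP => [|p] /=; last by rewrite rkA.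
by rewrite scalerDr scalerA -linearZ -addrA -linearD.
Qed.
Lemma cscale1 : left_id 1 cscale.
Proof. by move=> x; apply: coindP => [|p] /=; rewrite ?rk1 // linear0 scale1r addr0. Qed.
Lemma cscaleDr : right_distributive cscale +%R.
Proof. by move=> a x y; apply: coindP => [|p] //=; rewrite scalerDr addrACA. Qed.
Lemma cscaleDl x : {morph cscale^~ x : a b / a + b}.
Proof.
move=> a b; apply: coindP => [|p] /=; last by rewrite rkDl linearD.
by rewrite scalerDl linearD addrACA.
Qed.
HB.instance Definition _ := GRing.Zmodule_isLmodule.Build A coind
  cscaleA cscale1 cscaleDr cscaleDl.

Lemma ctop_sum I (r : seq I) (F : I -> coind) :
  ctop (\sum_(i <- r) F i) = \sum_(i <- r) ctop (F i).
Proof. exact: (big_morph ctop (fun _ _ => erefl) erefl). Qed.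

Lemma cmap_sum I (r : seq I) (F : I -> coind) p :
  cmap (\sum_(i <- r) F i) p = \sum_(i <- r) cmap (F i) p.
Proof. exact: (big_morph (cmap^~ p) (fun _ _ => erefl) erefl). Qed.

Lemma ctop_eB x : ctop (eB P0 *: x) = ctop x.
Proof. by rewrite /= linear0 addr0 scale1r. Qed.

Lemma ctop_inP p x : ctop (inP p *: x) = cmap x p.
Proof. by rewrite /= scale0r add0r. Qed.

Definition cembed (n : N) := Coind n linear_cst0.

End Coinduction.

Section Adjunction.
Variables (k : fieldType) (B : falgType k) (P0 : lmodType B).
Local Notation A := (onept P0).
Variables (Q : lmodType A) (N : lmodType B).

Section Adjunct.
Variable g : {linear RM Q -> N}.

Lemma linear_adjunct_map q : linear (fun p => g (RinP p q)).
Proof. by move=> b p p'; rewrite RinP_linear linearP. Qed.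

Definition adjunct q : coind P0 N := Coind (g (Rproj q)) (linear_adjunct_map q).

Lemma adjunct_linear : linear adjunct.
Proof.
move=> a q q'; apply: coindP => [|p] /=; first by rewrite RprojP !linearD linearZ.
by rewrite RinPP linearD.
Qed.
HB.instance Definition _ := GRing.isLinear.Build A Q (coind P0 N) *:%R
  adjunct adjunct_linear.

Lemma ctop_adjunct q : ctop (adjunct q) = g (Rproj q).
Proof. by []. Qed.

Lemma cmap_adjunct q p : cmap (adjunct q) p = g (RinP p q).
Proof. by []. Qed.

End Adjunct.

Section Coadjunct.
Variable F : {linear Q -> coind P0 N}.

Definition coadjunct (x : RM Q) : N := ctop (F (val x)).

Lemma coadjunctE x : coadjunct x = ctop (F (val x)).
Proof. by []. Qed.

Lemma coadjunct_linear : linear coadjunct.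
Proof. by move=> b x y; rewrite /coadjunct /= linearP /= linear0 addr0. Qed.
HB.instance Definition _ := GRing.isLinear.Build B (RM Q) N *:%R
  coadjunct coadjunct_linear.

End Coadjunct.
End Adjunction.

Lemma Dcls_RmorE (k : fieldType) (B : falgType k) (P0 : lmodType B)
    (Q1 Q0 : lmodType (onept P0)) (sigma : {linear Q1 -> Q0}) (N : lmodType B) :
  Dcls (Rmor sigma) N <-> Dcls sigma (coind P0 N).
Proof.
split=> [HD F | HD f].
  have [g g_sigma] := HD (coadjunct F); exists (adjunct g) => q.
  apply: coindP => [|p] /=.
    by rewrite Rproj_mor g_sigma -ctop_eB -linearZ.
  by rewrite (RinP_mor sigma) g_sigma -ctop_inP -linearZ.
have [G G_sigma] := HD (adjunct f); exists (coadjunct G) => x /=.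
by rewrite coadjunctE /= G_sigma ctop_adjunct Rproj_val.
Qed.

Lemma Gen_RM_of_coind (k : fieldType) (B : falgType k) (P0 : lmodType B)
    (T : lmodType (onept P0)) (N : lmodType B) :
  Gen T (coind P0 N) -> Gen (RM T) N.
Proof.
move=> [I [F F_gen]]; exists I, (fun i => coadjunct (F i)) => n.
have [s n_sum] := F_gen (cembed P0 n); exists [seq (q.1, Rproj q.2) | q <- s].
rewrite big_map -[n]/(ctop (cembed P0 n)) n_sum ctop_sum; apply: eq_bigr => q _ /=.
by rewrite coadjunctE /= linearZ ctop_eB.
Qed.

Section SplitExtension.
Variables (k : fieldType) (B : falgType k) (P0 : lmodType B).
Local Notation A := (onept P0).
Variables (T : lmodType A) (h : {linear P0 -> RM T}).

(* The extension [0 -> T -> T (+) k -> S -> 0] in which [inP p] maps [(0, 1)]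
   to [val (h p)]; the [T]-component of a splitting of [1 : S], negated, lifts [h]. *)
Definition hext : Type := (T * k)%type.
HB.instance Definition _ := GRing.Zmodule.on hext.

Definition hext_scale (a : A) (e : hext) : hext :=
  (a *: e.1 + val (h (rk e.2 a.1.2)), a.2 * e.2).

Lemma hext_scaleA a b e : hext_scale a (hext_scale b e) = hext_scale (a * b) e.
Proof.
case: e => t d; rewrite /hext_scale /=; congr (_, _); last by rewrite mulrA.
by rewrite scalerDr scalerA scale_RM rkD -rk_comm rkA linearD [h (_ *: _)]linearZ -addrA.
Qed.
Lemma hext_scale1 : left_id 1 hext_scale.
Proof. by case=> t d; rewrite /hext_scale /= scale1r rkr0 linear0 addr0 mul1r. Qed.
Lemma hext_scaleDr : right_distributive hext_scale +%R.
Proof.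
move=> a [t d] [t' d']; rewrite /hext_scale /=; congr (_, _); last by rewrite mulrDr.
by rewrite scalerDr rkDl linearD addrACA.
Qed.
Lemma hext_scaleDl e : {morph hext_scale^~ e : a b / a + b}.
Proof.
case: e => t d a b; rewrite /hext_scale /=; congr (_, _); last by rewrite mulrDl.
by rewrite scalerDl rkD linearD addrACA.
Qed.
HB.instance Definition _ := GRing.Zmodule_isLmodule.Build A hext
  hext_scaleA hext_scale1 hext_scaleDr hext_scaleDl.

Definition hext_in (t : T) : hext := (t, 0).
Lemma hext_in_linear : linear hext_in.
Proof.
move=> a t t'; rewrite /hext_in; congr (_, _); last by rewrite /= mulr0 addr0.
by rewrite /= /hext_scale /= rk0 linear0 addr0.
Qed.
HB.instance Definition _ := GRing.isLinear.Build A T hext *:%R hext_in hext_in_linear.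

Definition hext_out (e : hext) : Smod P0 := e.2.
Lemma hext_out_linear : linear hext_out.
Proof. by []. Qed.
HB.instance Definition _ := GRing.isLinear.Build A hext (Smod P0) *:%R
  hext_out hext_out_linear.

Lemma hext_split : Ext1_zero (Smod P0) T ->
  exists t : T, eB P0 *: t = 0 /\ forall p, inP p *: t = val (h p).
Proof.
move=> Ext_S_T.
have [s sK] : exists s : {linear Smod P0 -> hext}, forall x, hext_out (s x) = x.
  apply: (Ext_S_T _ hext_in hext_out) => [t t' [] // | d | [t d]]; first by exists (0, d).
  by split=> [/= -> | [t' <-]]; [exists t | ].
pose e := s (1 : k); have e2 : e.2 = 1 := sK (1 : k).
have ann_e (a : A) : a.2 = 0 -> a *: e = 0.
  move=> a2; rewrite -linearZ (_ : a *: _ = 0 :> Smod P0) ?linear0 //.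
  by rewrite -[LHS]/(a.2 * 1 : k) a2 mul0r.
have eB_e : eB P0 *: e = 0 by exact: ann_e.
have inP_e p : inP p *: e = 0 by exact: ann_e.
exists (- e.1); split.
  by move: (congr1 fst eB_e); rewrite /= rkr0 linear0 addr0 scalerN => ->; rewrite oppr0.
move=> p; move: (congr1 fst (inP_e p)); rewrite /= e2 rk1 scalerN => /eqP.
by rewrite addr_eq0 => /eqP ->; rewrite opprK.
Qed.

End SplitExtension.

Section DualBasis.
Variables (R : nzRingType) (P M : lmodType R).

Definition rowcomb m (v : 'I_m -> P) (r : 'rV[R]_m) : P := \sum_j r 0 j *: v j.

Lemma rowcomb_linear m (v : 'I_m -> P) : linear (rowcomb v).
Proof.
move=> b r r'; rewrite /rowcomb scaler_sumr -big_split /=; apply: eq_bigr => j _.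
by rewrite !mxE scalerDl scalerA.
Qed.
HB.instance Definition _ m v := GRing.isLinear.Build R 'rV[R]_m P *:%R
  (@rowcomb m v) (rowcomb_linear v).

Lemma dual_basis : fin_gen P -> projective P ->
  exists m (v : 'I_m -> P) (c : 'I_m -> P -> R^o),
    (forall j, linear (c j)) /\ forall p, p = \sum_j c j p *: v j.
Proof.
move=> [m [v v_span]] projP.
have rowcomb_surj : surj (rowcomb v).
  move=> p; have [c ->] := v_span p; exists (\row_i c i).
  by apply: eq_bigr => j _; rewrite mxE.
have [l lK] := projP _ _ (rowcomb v) idfun rowcomb_surj.
exists m, v, (fun j p => l p 0 j); split=> [j b p q | p]; first by rewrite linearP !mxE.
by rewrite -{1}[p]lK.
Qed.

Lemma linear_functional_scaler (c : P -> R^o) (y : M) :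
  linear c -> linear (fun p => c p *: y).
Proof. by move=> cL b p q; rewrite cL scalerDl scalerA. Qed.

End DualBasis.

Lemma RM_lift (k : fieldType) (B : falgType k) (P0 : lmodType B)
    (T : lmodType (onept P0)) (h : P0 -> RM T) :
  Ext1_zero (Smod P0) T -> linear h ->
  exists t : T, Rproj t = 0 /\ forall p, RinP p t = h p.
Proof.
move=> Ext_S_T hL.
pose hl : {linear P0 -> RM T} := HB.pack h (GRing.isLinear.Build _ _ _ _ h hL).
have [t [eB_t inP_t]] := hext_split hl Ext_S_T.
by exists t; split=> [|p]; apply: val_inj; rewrite /= ?eB_t ?inP_t.
Qed.

Section GenCoind.
Variables (k : fieldType) (B : falgType k) (P0 : lmodType B).
Local Notation A := (onept P0).
Variables (T : lmodType A) (N : lmodType B) (I : Type) (F : I -> {linear RM T -> N}).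

Definition in_span (x : coind P0 N) :=
  exists s : seq (I * T), x = \sum_(q <- s) adjunct (F q.1) q.2.

Lemma in_span0 : in_span 0.
Proof. by exists [::]; rewrite big_nil. Qed.

Lemma in_spanD x y : in_span x -> in_span y -> in_span (x + y).
Proof. by move=> [s ->] [s' ->]; exists (s ++ s'); rewrite big_cat. Qed.

Lemma in_span_sum J (r : seq J) (G : J -> coind P0 N) :
  (forall j, in_span (G j)) -> in_span (\sum_(j <- r) G j).
Proof.
move=> spanG; elim: r => [|j r IHr]; first by rewrite big_nil; exact: in_span0.
by rewrite big_cons; apply: in_spanD.
Qed.

Hypothesis F_gen : forall n : N, exists s : seq (I * RM T), n = \sum_(q <- s) F q.1 q.2.

Lemma in_span_cembed n : in_span (cembed P0 n).
Proof.
have [s ->] := F_gen n; exists [seq (q.1, val q.2) | q <- s]; rewrite big_map.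
apply: coindP => [|p] /=.
  by rewrite ctop_sum; apply: eq_bigr => q _; rewrite ctop_adjunct Rproj_val.
by rewrite cmap_sum big1 // => q _; rewrite cmap_adjunct RinP_val linear0.
Qed.

Hypothesis Ext_S_T : Ext1_zero (Smod P0) T.
Variables (c : P0 -> B^o) (cL : linear c).

Definition crank1 (y : N) : coind P0 N := Coind 0 (linear_functional_scaler y cL).

Lemma crank1D y y' : crank1 (y + y') = crank1 y + crank1 y'.
Proof. by apply: coindP => [|p] /=; rewrite ?addr0 // scalerDr. Qed.

Lemma crank10 : crank1 0 = 0.
Proof. by apply: coindP => [|p] //=; rewrite scaler0. Qed.

Lemma in_span_crank1 y : in_span (crank1 y).
Proof.
have [s ->] := F_gen y; rewrite (big_morph crank1 crank1D crank10).
apply: in_span_sum => q.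
have [t [t_top t_map]] := RM_lift Ext_S_T (linear_functional_scaler q.2 cL).
exists [:: (q.1, t)]; rewrite big_seq1.
by apply: coindP => [|p] /=; rewrite ?t_top ?linear0 // t_map linearZ.
Qed.

End GenCoind.

Lemma Gen_coind_of_RM (k : fieldType) (B : falgType k) (P0 : lmodType B)
    (T : lmodType (onept P0)) (N : lmodType B) :
  fin_gen P0 -> projective P0 -> Ext1_zero (Smod P0) T ->
  Gen (RM T) N -> Gen T (coind P0 N).
Proof.
move=> fgP0 projP0 Ext_S_T [I [F F_gen]].
have [m [v [c [cL v_dual]]]] := dual_basis fgP0 projP0.
exists I, (fun i => adjunct (F i)) => x; suff : in_span F x by [].
have -> : x = cembed P0 (ctop x) + \sum_j crank1 (cL j) (cmap x (v j)).
  apply: coindP => [|p] /=; first by rewrite ctop_sum big1 ?addr0.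
  rewrite add0r cmap_sum {1}(v_dual p) linear_sum.
  by apply: eq_bigr => j _; rewrite linearZ.
apply: in_spanD; first exact: in_span_cembed.
by apply: in_span_sum => j; apply: in_span_crank1.
Qed.

Section CoindMorphism.
Variables (k : fieldType) (B : falgType k) (P0 : lmodType B).
Variables (M N : lmodType B) (g : {linear M -> N}).

Lemma linear_coind_mor_map (x : coind P0 M) : linear (fun p => g (cmap x p)).
Proof. by move=> b p q; rewrite !linearP. Qed.

Definition coind_mor (x : coind P0 M) : coind P0 N :=
  Coind (g (ctop x)) (linear_coind_mor_map x).

Lemma coind_mor_linear : linear coind_mor.
Proof.
move=> a x y; apply: coindP => [|p] /=; last by rewrite linearD.
by rewrite !linearD linearZ.
Qed.
HB.instance Definition _ := GRing.isLinear.Build (onept P0) (coind P0 M) (coind P0 N)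
  *:%R coind_mor coind_mor_linear.

Lemma coind_mor_surj : projective P0 -> surj g -> surj coind_mor.
Proof.
move=> projP0 g_surj z; have [n gn] := g_surj (ctop z).
have [l gl] := projP0 _ _ g (cmap z) g_surj.
by exists (Coind n (@linearPZ _ _ _ l)); apply: coindP.
Qed.

End CoindMorphism.

Lemma projective_RM (k : fieldType) (B : falgType k) (P0 : lmodType B)
    (Q : lmodType (onept P0)) :
  projective P0 -> projective Q -> projective (RM Q).
Proof.
move=> projP0 projQ M N g f g_surj.
have [H gH] := projQ _ _ (coind_mor g) (adjunct f) (coind_mor_surj projP0 g_surj).
exists (coadjunct H) => x /=; rewrite coadjunctE.
by rewrite -[LHS]/(ctop (coind_mor g (H (val x)))) gH /= Rproj_val.
Qed.

Lemma proj_presentation_RM (k : fieldType) (B : falgType k) (P0 : lmodType B)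
    (Q1 Q0 T : lmodType (onept P0)) (sigma : {linear Q1 -> Q0}) :
  projective P0 -> proj_presentation sigma T -> proj_presentation (Rmor sigma) (RM T).
Proof.
move=> projP0 [projQ1 projQ0 [pi [pi_surj ker_pi]]].
split; [exact: projective_RM | exact: projective_RM | exists (Rmor pi); split].
  move=> y; have [q pi_q] := pi_surj (val y).
  by exists (Rproj q); rewrite -Rproj_mor pi_q Rproj_val.
move=> y; split.
  move=> /(congr1 val) /= /ker_pi [x sigma_x].
  by exists (Rproj x); rewrite -Rproj_mor sigma_x Rproj_val.
by move=> [x <-]; apply: val_inj => /=; apply/ker_pi; exists (val x).
Qed.

Unset Implicit Arguments.
Set Strict Implicit.
Set Printing Implicit Defensive.

Theorem theorem5p2 (k : closedFieldType) (B : falgType k) (P0 : lmodType B)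
  (hP0 : fin_gen P0 /\ projective P0)
  (Q1 Q0 T : lmodType (onept P0)) (sigma : {linear Q1 -> Q0})
  (hT : silting_wrt sigma T) :
  (forall N : lmodType B, Dcls (Rmor sigma) N -> Gen (RM T) N) /\
  (Ext1_zero (Smod P0) T ->
     (forall N : lmodType B, Gen (RM T) N -> Dcls (Rmor sigma) N) /\
     silting (RM T)).
Proof.
have [[fgP0 projP0] [pres_sigma silting_T]] := (hP0, hT).
have Dcls_Gen N : Dcls (Rmor sigma) N -> Gen (RM T) N.
  by move=> /Dcls_RmorE /silting_T; apply: Gen_RM_of_coind.
split=> // Ext_S_T.
have Gen_Dcls N : Gen (RM T) N -> Dcls (Rmor sigma) N.
  by move=> /(Gen_coind_of_RM fgP0 projP0 Ext_S_T) /silting_T /Dcls_RmorE.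
split=> //; exists (RM Q1), (RM Q0), (Rmor sigma).
split; first exact: proj_presentation_RM.
by move=> N; split; [apply: Dcls_Gen | apply: Gen_Dcls].
Qed.
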